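(* Let $\mathrm{R}$ be a real closed field, $\mathrm{C}=\mathrm{R}[i]$, let $F/G\in\mathrm{C}(Z)\setminus\{0\}$, $\gamma\in\mathrm{C}\setminus\{0\}$ and let $\Gamma=[x_0,x_1]\times[y_0,y_1]\subset\mathrm{R}^2$ with $x_0<x_1$, $y_0<y_1$. Then $\mathrm{W}(F/G\mid\partial\Gamma)=\mathrm{W}(\gamma F/G\mid\partial\Gamma)$.
   Context: For nonzero $P\in\mathrm{R}[X]$ and $x\in\mathrm{R}$ write uniquely $P=(X-x)^{\mathrm{mult}_x(P)}P_x$ with $P_x(x)\neq0$; for $P,Q\neq0$ set $\mathrm{val}_x(P/Q)=\mathrm{mult}_x(P)-\mathrm{mult}_x(Q)$. For $P,Q\in\mathrm{R}[X]$, $x\in\mathrm{R}$: $\mathrm{Ind}^+_x(P,Q)=\tfrac12\,\mathrm{sign}(P_x(x)Q_x(x))$ and $\mathrm{Ind}^-_x(P,Q)=\tfrac12(-1)^{\mathrm{val}_x(P/Q)}\mathrm{sign}(P_x(x)Q_x(x))$ if $P\ne0$, $Q\neq0$ and $\mathrm{val}_x(P/Q)<0$, and both are $0$ otherwise; $\mathrm{Ind}_x=\mathrm{Ind}^+_x-\mathrm{Ind}^-_x$. For $a<b$, $\mathrm{Ind}_a^b(P,Q)=\mathrm{Ind}_a^+(P,Q)+\sum_{x\in(a,b)}\mathrm{Ind}_x(P,Q)-\mathrm{Ind}_b^-(P,Q)$; $\mathrm{Ind}_a^b=-\mathrm{Ind}_b^a$ if $b<a$, and $\mathrm{Ind}_a^a=0$.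 For $F\in\mathrm{C}[X,Y]$ let $F_{\rm re},F_{\rm im}\in\mathrm{R}[X,Y]$ with $F=F_{\rm re}+iF_{\rm im}$, and $\overline F=F_{\rm re}-iF_{\rm im}$. Define $\mathrm{w}(F\mid\partial\Gamma)=\tfrac12\big(\mathrm{Ind}_{x_0}^{x_1}(F_{\rm re}(T,y_0),F_{\rm im}(T,y_0))+\mathrm{Ind}_{y_0}^{y_1}(F_{\rm re}(x_1,T),F_{\rm im}(x_1,T))+\mathrm{Ind}_{x_1}^{x_0}(F_{\rm re}(T,y_1),F_{\rm im}(T,y_1))+\mathrm{Ind}_{y_1}^{y_0}(F_{\rm re}(x_0,T),F_{\rm im}(x_0,T))\big)$ and $\mathrm{W}(F\mid\partial\Gamma)=\tfrac12\big(\mathrm{w}(F\mid\partial\Gamma)+\mathrm{w}(iF\mid\partial\Gamma)\big)$. $\mathrm{C}[Z]\subset\mathrm{C}[X,Y]$ via $Z=X+iY$. For $F,G\in\mathrm{C}[X,Y]$, $G\neq0$, $\mathrm{W}(F/G\mid\partial\Gamma):=\mathrm{W}(F\overline G\mid\partial\Gamma)$ (independent of the representation). *)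

From HB Require Import structures.
From mathcomp Require Import all_boot all_order all_algebra.
From mathcomp Require Import polyorder polyrcf complex.
Set Implicit Arguments. Unset Strict Implicit. Unset Printing Implicit Defensive.
Import Order.TTheory GRing.Theory Num.Theory.
Local Open Scope ring_scope.

Section CauchyIndex.
Variable R : rcfType.

Definition cofx (x : R) (P : {poly R}) : {poly R} :=
  P %/ ('X - x%:P) ^+ (multiplicity x P).

Definition valx (x : R) (P Q : {poly R}) : int :=
  (multiplicity x P)%:Z - (multiplicity x Q)%:Z.

Definition Indp (x : R) (P Q : {poly R}) : R :=
  if [&& P != 0, Q != 0 & valx x P Q < 0] then
    2^-1 * Num.sg ((cofx x P).[x] * (cofx x Q).[x])
  else 0.

Definition Indm (x : R) (P Q : {poly R}) : R :=
  if [&& P != 0, Q != 0 & valx x P Q < 0] then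
    2^-1 * ((-1) ^ (valx x P Q)) * Num.sg ((cofx x P).[x] * (cofx x Q).[x])
  else 0.

Definition Indx (x : R) (P Q : {poly R}) : R := Indp x P Q - Indm x P Q.

(* For a < b.  The sum over x in (a,b) is taken over the roots of Q in (a,b):
   Ind_x(P,Q) = 0 unless mult_x Q > mult_x P >= 0, i.e. unless Q(x) = 0. *)
Definition Ind_lt (a b : R) (P Q : {poly R}) : R :=
  Indp a P Q + \sum_(x <- roots Q a b) Indx x P Q - Indm b P Q.

Definition Ind (a b : R) (P Q : {poly R}) : R :=
  if a < b then Ind_lt a b P Q
  else if b < a then - Ind_lt b a P Q
  else 0.

(* Bivariate polynomials C[X,Y] are {poly {poly R[i]}}: outer variable Y,
   inner variable X. *)
Definition bRe (F : {poly {poly R[i]}}) : {poly {poly R}} :=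
  map_poly (map_poly (@complex.Re R)) F.
Definition bIm (F : {poly {poly R[i]}}) : {poly {poly R}} :=
  map_poly (map_poly (@complex.Im R)) F.
Definition bconj (F : {poly {poly R[i]}}) : {poly {poly R[i]}} :=
  map_poly (map_poly conjc) F.

Definition evalY (P : {poly {poly R}}) (y : R) : {poly R} := P.[y%:P].
Definition evalX (P : {poly {poly R}}) (x : R) : {poly R} :=
  map_poly (fun q : {poly R} => q.[x]) P.

Definition iC : R[i] := Complex 0 1.

(* C[Z] -> C[X,Y], Z = X + iY *)
Definition embZ (F : {poly R[i]}) : {poly {poly R[i]}} :=
  (map_poly (fun c : R[i] => c%:P%:P) F).[('X)%:P + iC%:P%:P * 'X].

Definition wind (x0 x1 y0 y1 : R) (F : {poly {poly R[i]}}) : R :=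
  2^-1 * ( Ind x0 x1 (evalY (bRe F) y0) (evalY (bIm F) y0)
         + Ind y0 y1 (evalX (bRe F) x1) (evalX (bIm F) x1)
         + Ind x1 x0 (evalY (bRe F) y1) (evalY (bIm F) y1)
         + Ind y1 y0 (evalX (bRe F) x0) (evalX (bIm F) x0) ).

Definition Wind (x0 x1 y0 y1 : R) (F : {poly {poly R[i]}}) : R :=
  2^-1 * (wind x0 x1 y0 y1 F + wind x0 x1 y0 y1 (iC%:P%:P * F)).

(* W(F/G | dGamma) := W(F * \overline G | dGamma) *)
Definition WindQ (x0 x1 y0 y1 : R) (F G : {poly {poly R[i]}}) : R :=
  Wind x0 x1 y0 y1 (F * bconj G).

End CauchyIndex.

From HB Require Import structures.
From mathcomp Require Import all_boot all_order all_algebra.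
From mathcomp Require Import polyorder polyrcf complex qe_rcf_th zify ring.
Import Order.TTheory GRing.Theory Num.Theory.
Set Implicit Arguments. Unset Strict Implicit. Unset Printing Implicit Defensive.
Local Open Scope ring_scope.

(* Write gamma = u + i v and h = F conj(G).  For real gamma every Cauchy index
   is merely multiplied by sg(u)^2 = 1.  Otherwise, on each edge the pair
   (Re, Im) of gamma h is the rotation of (Re h, Im h) by gamma, and the
   inversion formula Ind(P, Q) + Ind(Q, P) = (signs at the ends) shows that the
   rotation changes the Cauchy index only by terms attached to the two ends of
   the edge.  Such an end term depends only on the first nonzero Taylor
   coefficient of h at the corner.  For the horizontal and the vertical edge
   through a corner z this coefficient is F1(z) conj(G1(z)), where
   F = (Z - z)^m F1 and G = (Z - z)^n G1, up to the unit i^m (-i)^n; the end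
   terms are invariant under multiplication by i, so those of adjacent edges
   cancel around the rectangle. *)

Section CauchyIndex.
Variable R : rcfType.
Implicit Types (P Q : {poly R}) (a b c x : R).

Lemma sgp_right_XsubCn x n : sgp_right (('X - x%:P) ^+ n) x = 1.
Proof.
elim: n => [|n IHn]; first by rewrite expr0 -polyC1 sgp_rightc sgr1.
rewrite exprS sgp_right_mul IHn mulr1 sgp_right_rec polyXsubC_eq0 /=.
by rewrite root_XsubC eqxx /= derivXsubC -polyC1 sgp_rightc sgr1.
Qed.

Lemma sgr_cofx x P : P != 0 -> Num.sg (cofx x P).[x] = sgp_right P x.
Proof.
move=> P0; case: (mu_spec x P0) => q qx0 defP.
have ->: cofx x P = q.
  by rewrite /cofx {1}defP mulpK // expf_neq0 // polyXsubC_eq0.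
by rewrite {1}defP sgp_right_mul sgp_right_XsubCn mulr1 sgp_rightNroot.
Qed.

Lemma valx_lt0 x P Q : (valx x P Q < 0) = (\mu_x P < \mu_x Q)%N.
Proof. by rewrite /valx subr_lt0 ltz_nat. Qed.

Lemma sign_exprz_subn (m n : nat) : (m < n)%N ->
  (-1 : R) ^ (m%:Z - n%:Z) = (-1) ^+ (m + n).
Proof.
move=> lt_mn; have ->: m%:Z - n%:Z = - (n - m)%N%:Z by lia.
rewrite -exprnN invr_sign -signr_odd oddB ?(ltnW lt_mn) //.
by rewrite -[RHS]signr_odd oddD addbC.
Qed.

Lemma Indp_sgp_right x P Q : Indp x P Q =
  if [&& P != 0, Q != 0 & (\mu_x P < \mu_x Q)%N]
  then 2^-1 * (sgp_right P x * sgp_right Q x) else 0.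
Proof.
rewrite /Indp valx_lt0; case: ifP => // /and3P[P0 Q0 _].
by rewrite sgrM !sgr_cofx.
Qed.

Lemma Indm_sgp_right x P Q : Indm x P Q =
  if [&& P != 0, Q != 0 & (\mu_x P < \mu_x Q)%N]
  then 2^-1 * ((-1) ^+ (\mu_x P + \mu_x Q) * (sgp_right P x * sgp_right Q x))
  else 0.
Proof.
rewrite /Indm valx_lt0; case: ifP => // /and3P[P0 Q0 lt_mu].
by rewrite sgrM !sgr_cofx // /valx sign_exprz_subn // -mulrA.
Qed.

Lemma Indx_jump x P Q : Indx x P Q = (jump P Q x)%:~R.
Proof.
rewrite /Indx Indp_sgp_right Indm_sgp_right /jump.
have [->|P0] := eqVneq P 0; first by rewrite /= subrr.
have [->|Q0] := eqVneq Q 0; first by rewrite /= mu0 subrr.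
rewrite /=; case: ltnP => lt_mu; last first.
  by rewrite subrr (_ : (_ - _ = 0)%N) ?mulr0n //; apply/eqP; rewrite subn_eq0.
have ->: odd (\mu_x Q - \mu_x P) = odd (\mu_x P + \mu_x Q).
  by rewrite oddB ?oddD ?(ltnW lt_mu) // addbC.
rewrite sgp_right_mul -signr_odd; set s := sgp_right P x * sgp_right Q x.
have : s ^+ 2 == 1 by rewrite exprMn !expr2 !sgp_right_square // mulr1.
rewrite sqrf_eq1 => /orP[]/eqP->.
all: case: (odd _); rewrite /= ?ltr10 ?ltrN10 ?expr0 ?expr1 ?mulr1n ?mulr0n.
all: by field.
Qed.

Lemma Ind_lt_cindex a b P Q :
  Ind_lt a b P Q = Indp a P Q + (cindex a b P Q)%:~R - Indm b P Q.
Proof.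
rewrite /Ind_lt /cindex rmorph_sum; congr (_ + _ - _).
by apply: eq_bigr => y _; rewrite Indx_jump.
Qed.

Lemma jump_mu x P Q : jump P Q x =
  if (P != 0) && (\mu_x P < \mu_x Q)%N
  then (-1) ^+ (sgp_right (P * Q) x < 0)%R *+ odd (\mu_x Q - \mu_x P) else 0.
Proof.
rewrite /jump; have [->|P0] := eqVneq P 0; first by [].
rewrite /=; case: ltnP => // le_mu.
by rewrite (_ : (_ - _ = 0)%N) ?mulr0n //; apply/eqP; rewrite subn_eq0.
Qed.

Lemma addZ_mu_lt x P Q c : P != 0 -> (\mu_x P < \mu_x Q)%N ->
  [/\ P + c *: Q != 0, \mu_x (P + c *: Q) = \mu_x P
    & sgp_right (P + c *: Q) x = sgp_right P x].
Proof.
move=> P0 lt_mu; have [->|c0] := eqVneq c 0; first by rewrite scale0r addr0.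
have lt_muZ : (\mu_x P < \mu_x (c *: Q))%N by rewrite mu_mulC.
have S0 : P + c *: Q != 0.
  apply: contraTneq lt_muZ => /eqP; rewrite addr_eq0 => /eqP ->.
  by rewrite mu_opp ltnn.
by split; rewrite // ?mu_addr // addrC sgp_right_addp0.
Qed.

Lemma addZ_mu_ge x P Q c : Q != 0 -> ~~ ((P != 0) && (\mu_x P < \mu_x Q)%N) ->
  ~~ ((P + c *: Q != 0) && (\mu_x (P + c *: Q) < \mu_x Q)%N).
Proof.
move=> Q0 ge_mu; apply/negP => /andP[S0]; rewrite ltnNge => /negP; apply.
rewrite -root_le_mu //; apply: dvdp_add.
  have [->|P0] := eqVneq P 0; first exact: dvdp0.
  by rewrite root_le_mu //; move: ge_mu; rewrite P0 /= -leqNgt.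
by rewrite -mul_polyC dvdp_mull ?root_mu.
Qed.

Lemma Indp_addZ x P Q c : Indp x (P + c *: Q) Q = Indp x P Q.
Proof.
rewrite !Indp_sgp_right; have [->|Q0] := eqVneq Q 0; first by rewrite !andbF.
rewrite /=; case lt_mu: ((P != 0) && _).
  case/andP: lt_mu => P0 lt_mu.
  by case: (addZ_mu_lt c P0 lt_mu) => -> -> ->; rewrite lt_mu.
by rewrite (negPf (addZ_mu_ge c Q0 (negbT lt_mu))).
Qed.

Lemma Indm_addZ x P Q c : Indm x (P + c *: Q) Q = Indm x P Q.
Proof.
rewrite !Indm_sgp_right; have [->|Q0] := eqVneq Q 0; first by rewrite !andbF.
rewrite /=; case lt_mu: ((P != 0) && _).
  case/andP: lt_mu => P0 lt_mu.
  by case: (addZ_mu_lt c P0 lt_mu) => -> -> ->; rewrite lt_mu.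
by rewrite (negPf (addZ_mu_ge c Q0 (negbT lt_mu))).
Qed.

Lemma jump_addZ x P Q c : jump (P + c *: Q) Q x = jump P Q x.
Proof.
rewrite !jump_mu; have [->|Q0] := eqVneq Q 0; first by rewrite mu0 !ltn0 !andbF.
case lt_mu: ((P != 0) && _).
  case/andP: lt_mu => P0 lt_mu; case: (addZ_mu_lt c P0 lt_mu) => -> -> sgS.
  by rewrite lt_mu /= !sgp_right_mul sgS.
by rewrite (negPf (addZ_mu_ge c Q0 (negbT lt_mu))).
Qed.

Lemma Ind_lt_addZ a b P Q c : Ind_lt a b (P + c *: Q) Q = Ind_lt a b P Q.
Proof.
rewrite !Ind_lt_cindex Indp_addZ Indm_addZ /cindex.
by congr (_ + _%:~R - _); apply: eq_bigr => y _; rewrite jump_addZ.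
Qed.

Lemma Indp_mulCp x P Q c : Indp x (c *: P) Q = Num.sg c * Indp x P Q.
Proof.
have [->|c0] := eqVneq c 0.
  by rewrite scale0r sgr0 mul0r Indp_sgp_right eqxx.
rewrite !Indp_sgp_right scaler_eq0 (negPf c0) /= mu_mulC //.
by case: ifP => _; rewrite ?mulr0 // sgp_right_scale; field.
Qed.

Lemma Indp_pmulC x P Q c : Indp x P (c *: Q) = Num.sg c * Indp x P Q.
Proof.
have [->|c0] := eqVneq c 0.
  by rewrite scale0r sgr0 mul0r Indp_sgp_right eqxx andbF.
rewrite !Indp_sgp_right scaler_eq0 (negPf c0) /= mu_mulC //.
by case: ifP => _; rewrite ?mulr0 // sgp_right_scale; field.
Qed.

Lemma Indm_mulCp x P Q c : Indm x (c *: P) Q = Num.sg c * Indm x P Q.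
Proof.
have [->|c0] := eqVneq c 0.
  by rewrite scale0r sgr0 mul0r Indm_sgp_right eqxx.
rewrite !Indm_sgp_right scaler_eq0 (negPf c0) /= mu_mulC //.
by case: ifP => _; rewrite ?mulr0 // sgp_right_scale; field.
Qed.

Lemma Indm_pmulC x P Q c : Indm x P (c *: Q) = Num.sg c * Indm x P Q.
Proof.
have [->|c0] := eqVneq c 0.
  by rewrite scale0r sgr0 mul0r Indm_sgp_right eqxx andbF.
rewrite !Indm_sgp_right scaler_eq0 (negPf c0) /= mu_mulC //.
by case: ifP => _; rewrite ?mulr0 // sgp_right_scale; field.
Qed.

Lemma Ind_lt_mulCp a b P Q c :
  Ind_lt a b (c *: P) Q = Num.sg c * Ind_lt a b P Q.
Proof.
rewrite !Ind_lt_cindex Indp_mulCp Indm_mulCp cindex_mulCp rmorphM /= -sgrEz.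
by rewrite mulrBr mulrDr.
Qed.

Lemma Ind_lt_pmulC a b P Q c :
  Ind_lt a b P (c *: Q) = Num.sg c * Ind_lt a b P Q.
Proof.
rewrite !Ind_lt_cindex Indp_pmulC Indm_pmulC cindex_pmulC rmorphM /= -sgrEz.
by rewrite mulrBr mulrDr.
Qed.

Definition sg_ratio x P Q : R :=
  if [&& P != 0, Q != 0 & \mu_x P == \mu_x Q]
  then sgp_right P x * sgp_right Q x else 0.

Lemma Indp_add_swap a P Q : P != 0 -> Q != 0 ->
  Indp a P Q + Indp a Q P =
  2^-1 * (sgp_right P a * sgp_right Q a - sg_ratio a P Q).
Proof.
move=> P0 Q0; rewrite !Indp_sgp_right /sg_ratio P0 Q0 /=.
by case: ltngtP => _ /=; rewrite ?addr0 ?add0r ?subr0; field.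
Qed.

Lemma Indm_add_swap b P Q : P != 0 -> Q != 0 ->
  Indm b P Q + Indm b Q P =
  2^-1 * ((-1) ^+ (\mu_b P + \mu_b Q) * (sgp_right P b * sgp_right Q b)
          - sg_ratio b P Q).
Proof.
move=> P0 Q0; rewrite !Indm_sgp_right /sg_ratio P0 Q0 /=.
case: ltngtP => [_|_|->] /=; rewrite ?addr0 ?add0r ?subr0.
- by field.
- by rewrite addnC; field.
- by rewrite addnn -signr_odd odd_double expr0 mul1r; field.
Qed.

Lemma Ind_lt0p a b Q : Ind_lt a b 0 Q = 0.
Proof.
by rewrite Ind_lt_cindex Indp_sgp_right Indm_sgp_right eqxx cindex0p add0r subr0.
Qed.

Lemma Ind_ltp0 a b P : Ind_lt a b P 0 = 0.
Proof.
rewrite Ind_lt_cindex Indp_sgp_right Indm_sgp_right eqxx andbF.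
by rewrite /cindex roots0 big_nil add0r subr0.
Qed.

Lemma variation_sg u v : u != 0 -> v != 0 ->
  (variation u v)%:~R = 2^-1 * (Num.sg v - Num.sg u) :> R.
Proof.
move=> u0 v0; rewrite /variation.
case: (ltgtP u 0) u0 => // hu _; case: (ltgtP v 0) v0 => // hv _.
- rewrite (ltr0_sg hu) (ltr0_sg hv) ltNge ltW ?nmulr_rgt0 //=.
  by rewrite mulr0 subrr mulr0.
- rewrite (nmulr_rlt0 _ hu) hv (ltr0_sg hu) (gtr0_sg hv) gtr0_sgz //= mulr1.
  by field.
- rewrite (pmulr_rlt0 _ hu) hv (gtr0_sg hu) (ltr0_sg hv) ltr0_sgz //= mulr1.
  by field.
- rewrite (gtr0_sg hu) (gtr0_sg hv) pmulr_rlt0 // ltNge ltW //=.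
  by rewrite mulr0 subrr mulr0.
Qed.

Lemma roots_shrink a b a' b' S Y :
  Y != 0 -> (forall x, root Y x -> root S x) ->
  a <= a' -> b' <= b -> {in `]a, a'], forall x, ~~ root S x} ->
  {in `[b', b[, forall x, ~~ root S x} -> roots Y a b = roots Y a' b'.
Proof.
move=> Y0 YS aa' b'b Sa Sb; apply: roots_uniq => //; last exact: sorted_roots.
move=> x; rewrite -(@roots_on_roots _ Y a b Y0 x).
case rY: (root Y x); rewrite ?andbF //.
have rS := YS _ rY; rewrite !andbT !in_itv /=.
apply/andP/andP => [[a'x xb']|[ax xb]].
  by split; [apply: le_lt_trans a'x | apply: lt_le_trans b'b].
split; rewrite ltNge; apply/negP => hx.
  by move: (Sa x); rewrite in_itv /= ax hx rS => /(_ isT).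
by move: (Sb x); rewrite in_itv /= xb hx rS => /(_ isT).
Qed.

Lemma noroot_near_ends a b p : a < b -> p != 0 ->
  exists a' b', [/\ [&& a < a', a' < b' & b' < b],
    {in `]a, a'], forall x, ~~ root p x}, {in `[b', b[, forall x, ~~ root p x},
    Num.sg p.[a'] = sgp_right p a
    & Num.sg p.[b'] = (-1) ^+ odd (\mu_b p) * sgp_right p b].
Proof.
move=> ab p0; have [a' a'_near] := neighpr_wit ab p0.
move: (a'_near); rewrite /neighpr in_itv /= => /andP[aa' a'_next].
have next_b : next_root p a b <= b.
  have := next_root_in p a b.
  by rewrite in_itv /= (max_l (ltW ab)) => /andP[_ ->].
have a'b := lt_le_trans a'_next next_b.
have [b' b'_near] := neighpl_wit a'b p0.
move: (b'_near); rewrite /neighpl in_itv /= => /andP[prev_b' b'b].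
have a'_prev : a' <= prev_root p a' b.
  have := prev_root_in p a' b.
  by rewrite in_itv /= (min_l (ltW a'b)) => /andP[-> _].
exists a', b'; split.
- by rewrite aa' b'b (le_lt_trans a'_prev prev_b').
- move=> x; rewrite in_itv /= => /andP[ax xa']; apply: (@next_noroot _ p a b).
  by rewrite in_itv /= ax (le_lt_trans xa' a'_next).
- move=> x; rewrite in_itv /= => /andP[b'x xb]; apply: (@prev_noroot _ p a' b).
  by rewrite in_itv /= xb (lt_le_trans prev_b' b'x).
- exact: sgr_neighpr a'_near.
- exact: sgr_neighpl b'_near.
Qed.

(* Inside the interval this is [cindex_inv], applied on [a', b'] where [P * Q]
   does not vanish; the half-weight end terms [Indp], [Indm] give [sg_ratio]. *)
Lemma Ind_lt_inv a b P Q : a < b ->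
  Ind_lt a b P Q + Ind_lt a b Q P = 2^-1 * (sg_ratio b P Q - sg_ratio a P Q).
Proof.
move=> ab; have [->|P0] := eqVneq P 0.
  by rewrite Ind_lt0p Ind_ltp0 /sg_ratio eqxx /= subrr mulr0 addr0.
have [->|Q0] := eqVneq Q 0.
  by rewrite Ind_lt0p Ind_ltp0 /sg_ratio eqxx andbF /= subrr mulr0 addr0.
have PQ0 : P * Q != 0 by rewrite mulf_neq0.
have [a' [b' [/and3P[aa' a'b' b'b] noroot_a noroot_b sg_a' sg_b']]] :=
  noroot_near_ends ab PQ0.
have rootsP : roots P a b = roots P a' b'.
  apply: roots_shrink (ltW aa') (ltW b'b) noroot_a noroot_b => // x rx.
  by rewrite rootM rx.
have rootsQ : roots Q a b = roots Q a' b'.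
  apply: roots_shrink (ltW aa') (ltW b'b) noroot_a noroot_b => // x rx.
  by rewrite rootM rx orbT.
have ra' : ~~ root (P * Q) a' by apply: noroot_a; rewrite in_itv /= aa' lexx.
have rb' : ~~ root (P * Q) b' by apply: noroot_b; rewrite in_itv /= b'b lexx.
have -> : Ind_lt a b P Q + Ind_lt a b Q P =
    (Indp a P Q + Indp a Q P) + (cindex a' b' Q P + cindex a' b' P Q)%:~R
    - (Indm b P Q + Indm b Q P).
  by rewrite !Ind_lt_cindex /cindex rootsP rootsQ rmorphD /=; ring.
rewrite cindex_inv // /cross variation_sg ?sg_a' ?sg_b' -?rootE //.
rewrite Indp_add_swap // Indm_add_swap // !sgp_right_mul mu_mul // signr_odd.
by field.
Qed.

(* [P'] is a combination of [Q'] and [Q], and [Q'] one of [P] and [Q]; the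
   invariance under translation and scaling then links [Ind_lt _ _ P' Q'] and
   [Ind_lt _ _ P Q] to the two indices of [(Q, Q')], related by [Ind_lt_inv]. *)
Lemma Ind_lt_rotate l r P Q P' Q' u v : v != 0 ->
  P' = u *: P - v *: Q -> Q' = v *: P + u *: Q -> l < r ->
  Ind_lt l r P' Q' =
  Ind_lt l r P Q - Num.sg v * (2^-1 * (sg_ratio r Q Q' - sg_ratio l Q Q')).
Proof.
move=> v0 defP' defQ' lr.
have P'E : P' = (u / v) *: Q' + (- ((u ^+ 2 + v ^+ 2) / v)) *: Q.
  rewrite defP' defQ'; apply/polyP => j.
  by rewrite !(coefD, coefB, coefZ, coefN); field.
have sgk : Num.sg (- ((u ^+ 2 + v ^+ 2) / v)) = - Num.sg v.
  rewrite sgrN sgrM sgrV (gtr0_sg (_ : 0 < u ^+ 2 + v ^+ 2)) ?mul1r //.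
  by apply: ltr_wpDl; rewrite ?sqr_ge0 // exprn_even_gt0.
have sgv2 : Num.sg v * Num.sg v = 1 by rewrite -expr2 sqr_sg v0.
have IndQ'Q : Ind_lt l r Q' Q = Num.sg v * Ind_lt l r P Q.
  by rewrite defQ' Ind_lt_addZ Ind_lt_mulCp.
rewrite P'E addrC Ind_lt_addZ Ind_lt_mulCp sgk.
have -> : Ind_lt l r Q Q' = 2^-1 * (sg_ratio r Q Q' - sg_ratio l Q Q')
                           - Num.sg v * Ind_lt l r P Q.
  by rewrite -IndQ'Q -Ind_lt_inv //; ring.
by rewrite mulrBr !mulNr opprK (mulrA _ _ (Ind_lt _ _ _ _)) sgv2 mul1r addrC.
Qed.

Lemma sg_ratio_germ t k (A B : {poly R}) : (A.[t] != 0) || (B.[t] != 0) ->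
  sg_ratio t (('X - t%:P) ^+ k * A) (('X - t%:P) ^+ k * B) =
  Num.sg A.[t] * Num.sg B.[t].
Proof.
move=> AB0.
have Xk0 : ('X - t%:P) ^+ k != 0 by rewrite expf_neq0 // polyXsubC_eq0.
have muXk (w : {poly R}) :
    w != 0 -> \mu_t (('X - t%:P) ^+ k * w) = (k + \mu_t w)%N.
  by move=> w0; rewrite mu_mul ?mulf_neq0 // mu_exp mu_XsubC mul1n.
have sgXk (w : {poly R}) : sgp_right (('X - t%:P) ^+ k * w) t = sgp_right w t.
  by rewrite sgp_right_mul sgp_right_XsubCn mul1r.
have neq0_horner (w : {poly R}) : w.[t] != 0 -> w != 0.
  by apply: contraNneq => ->; rewrite horner0.
rewrite /sg_ratio !sgXk.
have [At|At] := eqVneq A.[t] 0; have [Bt|Bt] := eqVneq B.[t] 0.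
- by move: AB0; rewrite At Bt eqxx.
- rewrite At sgr0 mul0r; have B0 := neq0_horner _ Bt.
  have [->|A0] := eqVneq A 0; first by rewrite mulr0 eqxx.
  rewrite !mulf_neq0 //= !muXk // (muNroot (_ : ~~ root B t)) ?rootE //.
  by rewrite eqn_add2l eqn0Ngt (mu_gt0 _ A0) rootE At eqxx.
- rewrite Bt sgr0 mulr0; have A0 := neq0_horner _ At.
  have [->|B0] := eqVneq B 0; first by rewrite mulr0 eqxx andbF.
  rewrite !mulf_neq0 //= !muXk // (muNroot (_ : ~~ root A t)) ?rootE //.
  by rewrite eqn_add2l eq_sym eqn0Ngt (mu_gt0 _ B0) rootE Bt eqxx.
- have A0 := neq0_horner _ At; have B0 := neq0_horner _ Bt.
  rewrite !mulf_neq0 //= !muXk // !muNroot ?rootE // eqxx.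
  by rewrite !sgp_rightNroot ?rootE.
Qed.

End CauchyIndex.

Section RealParts.
Variable R : rcfType.
Local Notation C := (R[i]).
Local Notation i := (iC R).
Local Notation rc := (real_complex R).
Implicit Types (g : C) (h : {poly C}) (B : {poly {poly C}}) (x y : R).

Definition ReP h : {poly R} := map_poly (@complex.Re R) h.
Definition ImP h : {poly R} := map_poly (@complex.Im R) h.

Lemma RePZ g h : ReP (g *: h) = complex.Re g *: ReP h - complex.Im g *: ImP h.
Proof.
apply/polyP => j; rewrite coefB !coefZ !coef_map_id0 // coefZ.
by case: g => g1 g2; case: (h`_j).
Qed.

Lemma ImPZ g h : ImP (g *: h) = complex.Im g *: ReP h + complex.Re g *: ImP h.
Proof.
apply/polyP => j; rewrite coefD !coefZ !coef_map_id0 // coefZ.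
by case: g => g1 g2; case: (h`_j) => h1 h2 /=; rewrite addrC.
Qed.

Lemma ImP_iZ h : ImP (i *: h) = ReP h.
Proof. by rewrite ImPZ /= scale0r scale1r addr0. Qed.

Lemma Re_rcM c z : complex.Re (rc c * z) = c * complex.Re z.
Proof. by case: z => a b /=; rewrite mul0r subr0. Qed.

Lemma Im_rcM c z : complex.Im (rc c * z) = c * complex.Im z.
Proof. by case: z => a b /=; rewrite mul0r addr0. Qed.

Definition restY B y : {poly C} := B.[(rc y)%:P].
Definition restX B x : {poly C} := map_poly (horner_eval (rc x)) B.

Section RealLinearPart.
Variable f : {additive C -> R}.
Hypothesis f_rcM : forall (c : R) (z : C), f (rc c * z) = c * f z.

Lemma map_poly_rcM (w : {poly R}) (g : {poly C}) :
  map_poly f (map_poly rc w * g) = w * map_poly f g.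
Proof.
apply/polyP => j; rewrite coef_map_id0 ?raddf0 // !coefM raddf_sum.
by apply: eq_bigr => l _; rewrite !coef_map_id0 ?raddf0.
Qed.

Lemma horner_map_real (g : {poly C}) (t : R) : (map_poly f g).[t] = f g.[rc t].
Proof.
elim/poly_ind: g => [|g c IHg]; first by rewrite map_poly0 !horner0 raddf0.
rewrite raddfD /= map_polyC.
have ->: map_poly f (g * 'X) = map_poly f g * 'X.
  by rewrite mulrC -[X in X * g](map_polyX rc) map_poly_rcM mulrC.
rewrite !hornerD !hornerMX !hornerC raddfD /= IHg.
by rewrite [in RHS]mulrC f_rcM mulrC.
Qed.

Lemma evalY_map B y :
  evalY (map_poly (map_poly f) B) y = map_poly f (restY B y).
Proof.
have size_mapB : (size (map_poly (map_poly f) B) <= size B)%N.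
  exact: size_poly.
rewrite /evalY /restY (horner_coef_wide _ size_mapB) horner_coef raddf_sum /=.
apply: eq_bigr => j _; rewrite coef_map_id0 ?map_poly0 //.
have ->: ((rc y)%:P) ^+ j = map_poly rc (y%:P ^+ j).
  by rewrite rmorphXn /= map_polyC.
by rewrite [in RHS]mulrC map_poly_rcM mulrC.
Qed.

Lemma evalX_map B x :
  evalX (map_poly (map_poly f) B) x = map_poly f (restX B x).
Proof.
apply/polyP => j; rewrite !coef_map_id0 ?map_poly0 ?horner0 ?raddf0 //.
by rewrite horner_map_real horner_evalE.
Qed.

End RealLinearPart.

End RealParts.

Section EdgeIndex.
Variable R : rcfType.
Local Notation C := (R[i]).
Local Notation i := (iC R).
Local Notation rc := (real_complex R).
Implicit Types (g : C) (h : {poly C}).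

(* Twice the contribution of one edge to [Wind]: the [w(F)] and [w(iF)] terms. *)
Definition edge_index l r h :=
  Ind_lt l r (ReP h) (ImP h) + Ind_lt l r (ReP (i *: h)) (ImP (i *: h)).

Definition corner_sign g h x :=
  sg_ratio x (ImP h) (ImP (g *: h)) + sg_ratio x (ReP h) (ReP (g *: h)).

Lemma edge_index_rotate l r g h : complex.Im g != 0 -> l < r ->
  edge_index l r (g *: h) = edge_index l r h
    - Num.sg (complex.Im g) * (2^-1 * (corner_sign g h r - corner_sign g h l)).
Proof.
move=> g0 lr; rewrite /edge_index /corner_sign.
have iZC : i *: (g *: h) = g *: (i *: h) by rewrite !scalerA mulrC.
rewrite (Ind_lt_rotate g0 (RePZ g h) (ImPZ g h) lr) iZC.
rewrite (Ind_lt_rotate g0 (RePZ g (i *: h)) (ImPZ g (i *: h)) lr).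
by rewrite -iZC !ImP_iZ; ring.
Qed.

Lemma Ind_lt_realZ l r g h : complex.Im g = 0 -> g != 0 ->
  Ind_lt l r (ReP (g *: h)) (ImP (g *: h)) = Ind_lt l r (ReP h) (ImP h).
Proof.
move=> g2 g0; rewrite RePZ ImPZ g2 !scale0r subr0 add0r.
have g1 : complex.Re g != 0.
  move: g0 g2; case: g => a b /= g0 b0.
  by apply: contraNneq g0 => a0; rewrite a0 b0.
by rewrite Ind_lt_mulCp Ind_lt_pmulC mulrA -expr2 sqr_sg g1 mul1r.
Qed.

Lemma edge_index_realZ l r g h : complex.Im g = 0 -> g != 0 ->
  edge_index l r (g *: h) = edge_index l r h.
Proof.
move=> g2 g0; have iZC : i *: (g *: h) = g *: (i *: h) by rewrite !scalerA mulrC.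
by rewrite /edge_index iZC !(Ind_lt_realZ _ _ _ g2 g0).
Qed.

Definition sg_pair (g b : C) : R :=
  Num.sg (complex.Im b) * Num.sg (complex.Im (g * b)) +
  Num.sg (complex.Re b) * Num.sg (complex.Re (g * b)).

Lemma Im_mul_neq0 (g b : C) : complex.Im g != 0 -> b != 0 ->
  (complex.Im b != 0) || (complex.Im (g * b) != 0).
Proof.
case: g => g1 g2; case: b => b1 b2 /= g2n b0.
rewrite -negb_and; apply/negP => /andP[/eqP b2E /eqP].
rewrite b2E mulr0 add0r => /eqP; rewrite mulf_eq0 (negPf g2n) /= => /eqP b1E.
by move: b0; rewrite b1E b2E eqxx.
Qed.

Lemma Re_mul_neq0 (g b : C) : complex.Im g != 0 -> b != 0 ->
  (complex.Re b != 0) || (complex.Re (g * b) != 0).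
Proof.
case: g => g1 g2; case: b => b1 b2 /= g2n b0.
rewrite -negb_and; apply/negP => /andP[/eqP b1E /eqP].
rewrite b1E mulr0 sub0r => /eqP; rewrite oppr_eq0 mulf_eq0 (negPf g2n) /=.
by move=> /eqP b2E; move: b0; rewrite b1E b2E eqxx.
Qed.

Lemma corner_sign_germ g h (w : {poly C}) (t : R) k :
  complex.Im g != 0 -> w.[rc t] != 0 -> h = ('X - (rc t)%:P) ^+ k * w ->
  corner_sign g h t = sg_pair g w.[rc t].
Proof.
move=> g0 w0 ->.
have XkE : ('X - (rc t)%:P) ^+ k = map_poly rc (('X - t%:P) ^+ k).
  by rewrite rmorphXn rmorphB /= map_polyX map_polyC.
have ReP_rcM := map_poly_rcM (@Re_rcM R).
have ImP_rcM := map_poly_rcM (@Im_rcM R).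
have ReP_horner := horner_map_real (@Re_rcM R).
have ImP_horner := horner_map_real (@Im_rcM R).
rewrite /corner_sign /sg_pair scalerAr XkE /ReP /ImP !ReP_rcM !ImP_rcM.
rewrite !sg_ratio_germ ?ReP_horner ?ImP_horner ?hornerZ //.
  exact: Re_mul_neq0.
exact: Im_mul_neq0.
Qed.

Lemma sg_pair_iM g b : sg_pair g (i * b) = sg_pair g b.
Proof.
have Re_iM z : complex.Re (i * z) = - complex.Im z.
  by case: z => a c /=; rewrite !mul0r mul1r sub0r.
have Im_iM z : complex.Im (i * z) = complex.Re z.
  by case: z => a c /=; rewrite !mul0r mul1r add0r.
by rewrite /sg_pair mulrCA !Re_iM !Im_iM !sgrN mulrNN addrC.
Qed.

Lemma sg_pairN g b : sg_pair g (- b) = sg_pair g b.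
Proof. by rewrite /sg_pair mulrN !raddfN /= !sgrN !mulrNN. Qed.

Lemma sg_pair_unit g b m n :
  sg_pair g (i ^+ m * (conjc i) ^+ n * b) = sg_pair g b.
Proof.
have ->: conjc i = - i by apply/eqP; rewrite eq_complex /= oppr0 !eqxx.
elim: m => [|m IHm].
  rewrite expr0 mul1r; elim: n => [|n IHn]; first by rewrite expr0 mul1r.
  by rewrite exprS !mulNr sg_pairN -mulrA sg_pair_iM.
by rewrite exprS -!mulrA sg_pair_iM mulrA IHm.
Qed.

End EdgeIndex.

Section Restriction.
Variable R : rcfType.
Local Notation C := (R[i]).
Local Notation i := (iC R).
Local Notation rc := (real_complex R).
Implicit Types (B : {poly {poly C}}) (F G : {poly C}) (x y : R).

Lemma evalY_bRe B y : evalY (bRe B) y = ReP (restY B y).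
Proof. exact: (evalY_map (@Re_rcM R)). Qed.

Lemma evalY_bIm B y : evalY (bIm B) y = ImP (restY B y).
Proof. exact: (evalY_map (@Im_rcM R)). Qed.

Lemma evalX_bRe B x : evalX (bRe B) x = ReP (restX B x).
Proof. exact: (evalX_map (@Re_rcM R)). Qed.

Lemma evalX_bIm B x : evalX (bIm B) x = ImP (restX B x).
Proof. exact: (evalX_map (@Im_rcM R)). Qed.

Lemma restYM B1 B2 y : restY (B1 * B2) y = restY B1 y * restY B2 y.
Proof. exact: hornerM. Qed.

Lemma restXM B1 B2 x : restX (B1 * B2) x = restX B1 x * restX B2 x.
Proof. exact: rmorphM. Qed.

Lemma restY_iM B y : restY (i%:P%:P * B) y = i *: restY B y.
Proof. by rewrite /restY hornerM hornerC mul_polyC. Qed.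

Lemma restX_iM B x : restX (i%:P%:P * B) x = i *: restX B x.
Proof.
by rewrite /restX rmorphM /= map_polyC /= horner_evalE hornerC mul_polyC.
Qed.

Lemma conjc_rc (t : R) : conjc (rc t) = rc t.
Proof. by apply/eqP; rewrite eq_complex /= oppr0 !eqxx. Qed.

Lemma restY_bconj B y : restY (bconj B) y = map_poly conjc (restY B y).
Proof.
rewrite /restY /bconj -horner_map /= map_polyC /=.
by congr (_.[_%:P]); exact/esym/conjc_rc.
Qed.

Lemma restX_bconj B x : restX (bconj B) x = map_poly conjc (restX B x).
Proof.
apply/polyP => j; rewrite /restX /bconj.
rewrite !coef_map_id0 ?map_poly0 ?horner0 ?raddf0 // !horner_evalE.
by rewrite -[in LHS](conjc_rc x) horner_map.
Qed.

Lemma restY_embZ F y : restY (embZ F) y = F \Po ('X + (i * rc y)%:P).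
Proof.
rewrite /restY /embZ /comp_poly -[LHS]horner_evalE -horner_map /=.
rewrite -map_poly_comp; congr (_.[_]).
  by apply: eq_map_poly => c /=; rewrite horner_evalE hornerC.
by rewrite horner_evalE hornerD hornerC hornerMX hornerC polyCM.
Qed.

Lemma restX_embZ F x : restX (embZ F) x = F \Po ((rc x)%:P + i *: 'X).
Proof.
rewrite /restX /embZ /comp_poly -horner_map /= -map_poly_comp; congr (_.[_]).
  by apply: eq_map_poly => c /=; rewrite map_polyC /= horner_evalE hornerC.
rewrite rmorphD rmorphM /= !map_polyC /= !horner_evalE !hornerC map_polyX.
by rewrite mul_polyC hornerX.
Qed.

Lemma restY_embZ_scalel c F B y :
  restY (embZ (c *: F) * B) y = c *: restY (embZ F * B) y.
Proof. by rewrite !restYM !restY_embZ comp_polyZ scalerAl. Qed.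

Lemma restX_embZ_scalel c F B x :
  restX (embZ (c *: F) * B) x = c *: restX (embZ F * B) x.
Proof. by rewrite !restXM !restX_embZ comp_polyZ scalerAl. Qed.

Lemma map_conjc_XsubC (t : R) :
  map_poly conjc ('X - (rc t)%:P) = 'X - (rc t)%:P.
Proof.
by rewrite rmorphB /= map_polyX map_polyC /=; congr (_ - _%:P); apply: conjc_rc.
Qed.

Lemma horner_conjc (p : {poly C}) (t : R) :
  (map_poly conjc p).[rc t] = conjc p.[rc t].
Proof. by rewrite -[in LHS]conjc_rc horner_map. Qed.

Lemma restY_embZ_germ F G F1 G1 x y m n :
  F = F1 * ('X - (rc x + i * rc y)%:P) ^+ m ->
  G = G1 * ('X - (rc x + i * rc y)%:P) ^+ n ->
  let q := 'X + (i * rc y)%:P in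
  restY (embZ F * bconj (embZ G)) y =
  ('X - (rc x)%:P) ^+ (m + n) * ((F1 \Po q) * map_poly conjc (G1 \Po q)).
Proof.
move=> -> -> q; rewrite [F1 * _]mulrC [G1 * _]mulrC.
rewrite restYM restY_bconj !restY_embZ -/q.
have Xq : ('X - (rc x + i * rc y)%:P) \Po q = 'X - (rc x)%:P.
  by rewrite comp_polyB comp_polyX comp_polyC /q polyCD; ring.
rewrite !comp_polyM !rmorphXn /= Xq rmorphM rmorphXn /= map_conjc_XsubC.
by rewrite exprD mulrACA.
Qed.

Lemma restX_embZ_germ F G F1 G1 x y m n :
  F = F1 * ('X - (rc x + i * rc y)%:P) ^+ m ->
  G = G1 * ('X - (rc x + i * rc y)%:P) ^+ n ->
  let q := (rc x)%:P + i *: 'X in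
  restX (embZ F * bconj (embZ G)) x = ('X - (rc y)%:P) ^+ (m + n) *
    ((i ^+ m * (conjc i) ^+ n) *: ((F1 \Po q) * map_poly conjc (G1 \Po q))).
Proof.
move=> -> -> q; rewrite [F1 * _]mulrC [G1 * _]mulrC.
rewrite restXM restX_bconj !restX_embZ -/q.
have Xq : ('X - (rc x + i * rc y)%:P) \Po q = i *: ('X - (rc y)%:P).
  rewrite comp_polyB comp_polyX comp_polyC /q polyCD polyCM -!mul_polyC.
  by ring.
rewrite !comp_polyM !rmorphXn /= Xq rmorphM rmorphXn /= map_polyZ /=.
rewrite map_conjc_XsubC !exprZn exprD -!(scalerAr, scalerAl) scalerA.
by rewrite mulrACA.
Qed.

(* The horizontal and vertical restrictions through a corner have the same order
   of vanishing there, and leading coefficients differing by the unit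
   [i ^+ m * (conjc i) ^+ n], which [sg_pair] does not see. *)
Lemma corner_sign_restY_restX F G (g : C) x y :
  F != 0 -> G != 0 -> complex.Im g != 0 ->
  corner_sign g (restY (embZ F * bconj (embZ G)) y) x =
  corner_sign g (restX (embZ F * bconj (embZ G)) x) y.
Proof.
move=> F0 G0 g0; set z := rc x + i * rc y.
have [F1 F1z defF] := mu_spec z F0; have [G1 G1z defG] := mu_spec z G0.
have qYx : ('X + (i * rc y)%:P).[rc x] = z by rewrite hornerD hornerX hornerC.
have qXy : ((rc x)%:P + i *: 'X).[rc y] = z.
  by rewrite hornerD hornerC hornerZ hornerX.
have F1G1z : F1.[z] * conjc G1.[z] != 0 by rewrite mulf_neq0 ?conjc_eq0 -?rootE.
have i0 : i != 0 by apply/eqP; case=> /eqP; rewrite oner_eq0.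
rewrite (corner_sign_germ g0 _ (restY_embZ_germ defF defG)); last first.
  by rewrite !hornerM horner_conjc !horner_comp qYx.
rewrite (corner_sign_germ g0 _ (restX_embZ_germ defF defG)); last first.
  rewrite hornerZ !hornerM horner_conjc !horner_comp qXy.
  by rewrite !mulf_neq0 ?expf_neq0 ?conjc_eq0.
by rewrite hornerZ !hornerM !horner_conjc !horner_comp qYx qXy sg_pair_unit.
Qed.

End Restriction.

Section Winding.
Variable R : rcfType.

Lemma IndE_lt (a b : R) P Q : a < b -> Ind a b P Q = Ind_lt a b P Q.
Proof. by move=> ab; rewrite /Ind ab. Qed.

Lemma IndE_gt (a b : R) P Q : a < b -> Ind b a P Q = - Ind_lt a b P Q.
Proof. by move=> ab; rewrite /Ind (lt_gtF ab) ab. Qed.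

Lemma Wind_edge_index (x0 x1 y0 y1 : R) B : x0 < x1 -> y0 < y1 ->
  Wind x0 x1 y0 y1 B = 2^-1 * (2^-1 *
    (edge_index x0 x1 (restY B y0) + edge_index y0 y1 (restX B x1)
     - edge_index x0 x1 (restY B y1) - edge_index y0 y1 (restX B x0))).
Proof.
move=> ltx lty; rewrite /Wind /wind /edge_index.
rewrite !evalY_bRe !evalY_bIm !evalX_bRe !evalX_bIm !restY_iM !restX_iM.
rewrite !(IndE_lt _ _ ltx) !(IndE_lt _ _ lty).
rewrite !(IndE_gt _ _ ltx) !(IndE_gt _ _ lty).
(* Abstracted so that [ring] does not unfold [Ind_lt], itself a sum. *)
by move: (Ind_lt x0 x1) (Ind_lt y0 y1) => Ix Iy; ring.
Qed.

End Winding.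

Theorem lemma3p7 (R : rcfType) (F G : {poly R[i]}) (gamma : R[i])
  (x0 x1 y0 y1 : R) :
  F != 0 -> G != 0 -> gamma != 0 -> x0 < x1 -> y0 < y1 ->
  WindQ x0 x1 y0 y1 (embZ F) (embZ G) =
  WindQ x0 x1 y0 y1 (embZ (gamma *: F)) (embZ G).
Proof.
move=> F0 G0 gamma0 ltx lty; rewrite /WindQ !(Wind_edge_index _ ltx lty).
rewrite !restY_embZ_scalel !restX_embZ_scalel.
have [gamma_real|gamma_nreal] := eqVneq (complex.Im gamma) 0.
  by rewrite !edge_index_realZ.
rewrite !edge_index_rotate // !(corner_sign_restY_restX _ _ F0 G0 gamma_nreal).
move: (edge_index x0 x1) (edge_index y0 y1) (corner_sign gamma) => Ex Ey D.
by ring.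
Qed.
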